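(* Let $X=\{a,b,c\}$ and consider the 25 commutative Frobenius objects in $\mathbf{Rel}$ on $X$ listed below (in all, $\tilde\mu$ is symmetric). Cases 1–20 have $\eta=\{a\}$, $\tilde\mu(a,x)=\tilde\mu(x,a)=\{x\}$, and $(\tilde\mu(b,b),\tilde\mu(b,c),\tilde\mu(c,c))$ and $\varepsilon$ given by: 1: $\varepsilon=\{a\}$, $(\{a\},\{c\},\{a,b\})$; 2: $\varepsilon=\{a\}$, $(\{a\},\{c\},\{a,b,c\})$; 3: $\varepsilon=\{a\}$, $(\{a,b\},\{c\},\{a,b\})$; 4: $\varepsilon=\{a\}$, $(\{a,b\},\{c\},\{a,b,c\})$; 5: $\varepsilon=\{a\}$, $(\{a,c\},\{b,c\},\{a,b\})$; 6: $\varepsilon=\{a\}$, $(\{a,c\},\{b,c\},\{a,b,c\})$; 7: $\varepsilon=\{a\}$, $(\{a,b,c\},\{b,c\},\{a,b,c\})$; 8: $\varepsilon=\{a\}$, $(\{b\},\{a,b,c\},\{b,c\})$; 9: $\varepsilon=\{a\}$, $(\{b\},\{a,b,c\},\{c\})$; 10: $\varepsilon=\{a\}$, $(\{c\},\{a\},\{b\})$; 11: $\varepsilon=\{a\}$, $(\{c\},\{a,b\},\{b,c\})$; 12: $\varepsilon=\{a\}$, $(\{b,c\},\{a,b,c\},\{b,c\})$; 13: $\varepsilon=\{b\}$, $(\emptyset,\emptyset,\{b\})$; 14: $\varepsilon=\{b\}$, $(\emptyset,\emptyset,\{b,c\})$; 15: $\varepsilon=\{b\}$, $(\{a\},\{c\},\{a,b\})$;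 16: $\varepsilon=\{b\}$, $(\{a\},\{c\},\{a,b,c\})$; 17: $\varepsilon=\{b\}$, $(\{c\},\{a\},\{b\})$; 18: $\varepsilon=\{b\}$, $(\{c\},\{a,c\},\{a,b,c\})$; 19: $\varepsilon=\{b\}$, $(\{a,c\},\{a,c\},\{a,b\})$; 20: $\varepsilon=\{b\}$, $(\{a,c\},\{a,c\},\{a,b,c\})$. Cases 21–24 have $\eta=\{a,b\}$, $\tilde\mu(a,a)=\{a\}$, $\tilde\mu(a,b)=\tilde\mu(a,c)=\emptyset$, $\tilde\mu(b,b)=\{b\}$, $\tilde\mu(b,c)=\{c\}$, and: 21: $\varepsilon=\{a,b\}$, $\tilde\mu(c,c)=\{b\}$; 22: $\varepsilon=\{a,b\}$, $\tilde\mu(c,c)=\{b,c\}$; 23: $\varepsilon=\{a,c\}$, $\tilde\mu(c,c)=\{b\}$; 24: $\varepsilon=\{a,c\}$, $\tilde\mu(c,c)=\emptyset$. Case 25: $\eta=\varepsilon=\{a,b,c\}$, $\tilde\mu(x,x)=\{x\}$, $\tilde\mu(x,y)=\emptyset$ for $x\neq y$. Then, for integers $g\ge0$, the partition functions are: for cases 1–12 and 21–25, $Z(\Sigma_g)=T$ for all $g$; for case 13, $Z(\Sigma_g)=T$ iff $g=1$; for cases 14, 15, 16, 18, 19, 20, $Z(\Sigma_g)=T$ iff $g\ge1$; for case 17, $Z(\Sigma_g)=T$ iff $g\equiv 1 \pmod 3$.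
   Context: $\mathbf{Rel}$ is the symmetric monoidal category of sets and relations ($S\circ R=\{(x,z):\exists y,(x,y)\in R,(y,z)\in S\}$, identities are diagonals, product is Cartesian product, unit $\{\bullet\}$). A relation $R\subseteq X\times Y$ is identified with $\tilde R:X\to\mathcal{P}(Y)$. A Frobenius object in $\mathbf{Rel}$ is a set $X$ with unit $\eta\subseteq X$ (relation $\{\bullet\}\to X$), counit $\varepsilon\subseteq X$ (relation $X\to\{\bullet\}$) and multiplication $\mu$ (relation $X\times X\to X$, with map $\tilde\mu$) satisfying unitality, associativity, and nondegeneracy: there is a (unique) relation $\beta:\{\bullet\}\to X\times X$ with $(\varepsilon\times\mathbf{1})\circ(\mu\times\mathbf{1})\circ(\mathbf{1}\times\beta)=(\mathbf{1}\times\varepsilon)\circ(\mathbf{1}\times\mu)\circ(\beta\times\mathbf{1})=\mathbf{1}$. The comultiplication is $\delta=(\mathbf{1}\times\mu)\circ(\beta\times\mathbf{1})$. Commutative means $\tilde\mu(x,y)=\tilde\mu(y,x)$. The partition function on the closed orientable surface of genus $g$ is $Z(\Sigma_g)=\varepsilon\circ(\mu\circ\delta)^g\circ\eta\in\{\emptyset,\{\bullet\}\}$, with $\emptyset$ read as $F$ and $\{\bullet\}$ as $T$. *)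

From HB Require Import structures.
From mathcomp Require Import all_boot.
Set Implicit Arguments. Unset Strict Implicit. Unset Printing Implicit Defensive.

Definition relT (A B : finType) := A -> B -> bool.

Definition releq (A B : finType) (R S : relT A B) : Prop :=
  forall x y, R x y = S x y.

Definition rcomp (A B C : finType) (S : relT B C) (R : relT A B) : relT A C :=
  fun x z => [exists y, R x y && S y z].

Definition rid (A : finType) : relT A A := fun x y => x == y.

Definition rtens (A B A' B' : finType) (R : relT A B) (S : relT A' B')
  : relT (A * A')%type (B * B')%type := fun p q => R p.1 q.1 && S p.2 q.2.

Definition rassoc (A B C : finType) : relT ((A * B) * C)%type (A * (B * C))%type :=
  fun p q => (p.1.1 == q.1) && (p.1.2 == q.2.1) && (p.2 == q.2.2).
Definition rassocV (A B C : finType) : relT (A * (B * C))%type ((A * B) * C)%type :=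
  fun q p => rassoc p q.
Definition rlunit (A : finType) : relT (unit * A)%type A := fun p y => p.2 == y.
Definition rlunitV (A : finType) : relT A (unit * A)%type := fun y p => rlunit p y.
Definition rrunit (A : finType) : relT (A * unit)%type A := fun p y => p.1 == y.
Definition rrunitV (A : finType) : relT A (A * unit)%type := fun y p => rrunit p y.

Arguments rid A : clear implicits.
Arguments rlunit A : clear implicits.
Arguments rlunitV A : clear implicits.
Arguments rrunit A : clear implicits.
Arguments rrunitV A : clear implicits.

Section Frob.
Variables (X : finType) (eta : relT unit X) (eps : relT X unit)
  (mu : relT (X * X)%type X).

Definition unital : Prop :=
  releq (rcomp mu (rcomp (rtens eta (rid X)) (rlunitV X))) (rid X) /\
  releq (rcomp mu (rcomp (rtens (rid X) eta) (rrunitV X))) (rid X).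

Definition associative_rel : Prop :=
  releq (rcomp mu (rtens mu (rid X)))
        (rcomp mu (rcomp (rtens (rid X) mu) (@rassoc X X X))).

Definition nondeg_for (beta : relT unit (X * X)%type) : Prop :=
  releq (rcomp (rlunit X) (rcomp (rtens eps (rid X)) (rcomp (rtens mu (rid X))
          (rcomp (@rassocV X X X) (rcomp (rtens (rid X) beta) (rrunitV X))))))
        (rid X) /\
  releq (rcomp (rrunit X) (rcomp (rtens (rid X) eps) (rcomp (rtens (rid X) mu)
          (rcomp (@rassoc X X X) (rcomp (rtens beta (rid X)) (rlunitV X))))))
        (rid X).

Definition commutative_rel : Prop := forall x y z, mu (x, y) z = mu (y, x) z.

Definition is_comm_Frobenius : Prop :=
  [/\ unital, associative_rel, exists beta, nondeg_for beta & commutative_rel].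

Definition delta (beta : relT unit (X * X)%type) : relT X (X * X)%type :=
  rcomp (rtens (rid X) mu) (rcomp (@rassoc X X X)
    (rcomp (rtens beta (rid X)) (rlunitV X))).

(* Z(Σ_g) = ε ∘ (μ∘δ)^g ∘ η ⊆ {•}×{•};  true = T, false = F *)
Definition Zpart (beta : relT unit (X * X)%type) (g : nat) : bool :=
  rcomp eps (rcomp (iter g (rcomp (rcomp mu (delta beta))) (rid X)) eta) tt tt.
End Frob.

Inductive elt := a | b | c.
Definition elt2nat (x : elt) : nat := match x with a => 0 | b => 1 | c => 2 end.
Definition nat2elt (n : nat) : option elt :=
  match n with 0 => Some a | 1 => Some b | 2 => Some c | _ => None end.
Lemma elt2natK : pcancel elt2nat nat2elt. Proof. by case. Qed.
HB.instance Definition _ := Countable.copy elt (pcan_type elt2natK).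
Lemma elt_enumP : finite_axiom [:: a; b; c]. Proof. by case. Qed.
HB.instance Definition _ := isFinite.Build elt elt_enumP.

(* data given as subsets (listed as sequences) and the map μ~ *)
Record FrobData := { etaS : seq elt; epsS : seq elt; muS : elt -> elt -> seq elt }.
Definition eta_of (D : FrobData) : relT unit elt := fun _ x => x \in etaS D.
Definition eps_of (D : FrobData) : relT elt unit := fun x _ => x \in epsS D.
Definition mu_of (D : FrobData) : relT (elt * elt)%type elt :=
  fun p z => z \in muS D p.1 p.2.

Definition mk120 (e bb bc cc : seq elt) : FrobData :=
  {| etaS := [:: a]; epsS := e;
     muS := fun x y => match x, y with
                       | a, _ => [:: y] | _, a => [:: x]
                       | b, b => bb | b, c => bc | c, b => bc | c, c => cc end |}.
Definition mk2124 (e cc : seq elt) : FrobData :=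
  {| etaS := [:: a; b]; epsS := e;
     muS := fun x y => match x, y with
                       | a, a => [:: a] | a, _ => [::] | _, a => [::]
                       | b, b => [:: b] | b, c => [:: c] | c, b => [:: c]
                       | c, c => cc end |}.
Definition case25 : FrobData :=
  {| etaS := [:: a; b; c]; epsS := [:: a; b; c];
     muS := fun x y => if x == y then [:: x] else [::] |}.

Definition frob_case (i : nat) : FrobData :=
  match i with
  | 1 => mk120 [:: a] [:: a] [:: c] [:: a; b]
  | 2 => mk120 [:: a] [:: a] [:: c] [:: a; b; c]
  | 3 => mk120 [:: a] [:: a; b] [:: c] [:: a; b]
  | 4 => mk120 [:: a] [:: a; b] [:: c] [:: a; b; c]
  | 5 => mk120 [:: a] [:: a; c] [:: b; c] [:: a; b]
  | 6 => mk120 [:: a] [:: a; c] [:: b; c] [:: a; b; c]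
  | 7 => mk120 [:: a] [:: a; b; c] [:: b; c] [:: a; b; c]
  | 8 => mk120 [:: a] [:: b] [:: a; b; c] [:: b; c]
  | 9 => mk120 [:: a] [:: b] [:: a; b; c] [:: c]
  | 10 => mk120 [:: a] [:: c] [:: a] [:: b]
  | 11 => mk120 [:: a] [:: c] [:: a; b] [:: b; c]
  | 12 => mk120 [:: a] [:: b; c] [:: a; b; c] [:: b; c]
  | 13 => mk120 [:: b] [::] [::] [:: b]
  | 14 => mk120 [:: b] [::] [::] [:: b; c]
  | 15 => mk120 [:: b] [:: a] [:: c] [:: a; b]
  | 16 => mk120 [:: b] [:: a] [:: c] [:: a; b; c]
  | 17 => mk120 [:: b] [:: c] [:: a] [:: b]
  | 18 => mk120 [:: b] [:: c] [:: a; c] [:: a; b; c]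
  | 19 => mk120 [:: b] [:: a; c] [:: a; c] [:: a; b]
  | 20 => mk120 [:: b] [:: a; c] [:: a; c] [:: a; b; c]
  | 21 => mk2124 [:: a; b] [:: b]
  | 22 => mk2124 [:: a; b] [:: b; c]
  | 23 => mk2124 [:: a; c] [:: b]
  | 24 => mk2124 [:: a; c] [::]
  | _ => case25
  end.

Definition IsCF (i : nat) : Prop :=
  is_comm_Frobenius (eta_of (frob_case i)) (eps_of (frob_case i)) (mu_of (frob_case i)).
Definition Nondeg (i : nat) (beta : relT unit (elt * elt)%type) : Prop :=
  nondeg_for (eps_of (frob_case i)) (mu_of (frob_case i)) beta.
Definition Z (i : nat) (beta : relT unit (elt * elt)%type) (g : nat) : bool :=
  Zpart (eta_of (frob_case i)) (eps_of (frob_case i)) (mu_of (frob_case i)) beta g.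

From mathcomp Require Import all_boot zify.

(* Nondegeneracy says exactly that the copairing beta, read as a relation
   X -> X, is a two-sided inverse in Rel of the pairing eps o mu; an inverse in
   Rel is the converse relation, so beta is determined by (eps, mu) and mu o delta
   becomes an explicit "handle" relation H.  Then Z(Sigma_g) holds iff eps meets
   the image H^g(eta), and g |-> H^g(eta) is an orbit of a self-map of the finite
   set of subsets of X, hence eventually periodic.  For each of the 25 structures
   the axioms and the first terms of the orbit are checked by computation. *)

Set Implicit Arguments.
Unset Strict Implicit.
Unset Printing Implicit Defensive.

Lemma rel_inverse_converse (A B : finType) (R : relT A B) (S : relT B A) :
  releq (rcomp S R) (rid A) -> releq (rcomp R S) (rid B) ->
  forall x y, S y x = R x y.
Proof.
move=> RS SR x y; apply/idP/idP => [Syx | Rxy].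
- have /existsP [y' /andP [Rxy' Sy'x]] : rcomp S R x x by rewrite RS /rid.
  suff /eqP -> : y == y' by [].
  by rewrite -/(rid B y y') -SR; apply/existsP; exists x; rewrite Syx.
- have /existsP [x' /andP [Syx' Rx'y]] : rcomp R S y y by rewrite SR /rid.
  suff /eqP -> : x == x' by [].
  by rewrite -/(rid A x x') -RS; apply/existsP; exists y; rewrite Rxy.
Qed.

Lemma iter_periodic (T : Type) (f : T -> T) (x : T) n p :
  iter (n + p) f x = iter n f x -> forall k, n <= k -> iter (k + p) f x = iter k f x.
Proof. by move=> per k /subnK <-; rewrite -addnA iterD per -iterD. Qed.

Lemma eq_eventually_periodic (T : Type) (u v : nat -> T) n p : 0 < p ->
  (forall k, n <= k -> u (k + p) = u k) -> (forall k, n <= k -> v (k + p) = v k) ->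
  (forall k, k < n + p -> u k = v k) -> u =1 v.
Proof.
move=> p_gt0 per_u per_v init; elim/ltn_ind => k IH.
case: (ltnP k (n + p)) => [|k_ge]; first exact: init.
have -> : k = (k - p) + p by rewrite subnK //; lia.
by rewrite per_u ?per_v ?IH //; lia.
Qed.

Ltac rel_split y :=
  let T := type of y in
  lazymatch eval hnf in T with
  | prod _ _ =>
      let y1 := fresh "y" in let y2 := fresh "y" in
      destruct y as [y1 y2]; rel_split y1; rel_split y2
  | unit => destruct y
  | _ => idtac
  end.

Ltac rel_destruct :=
  repeat match goal with
  | H : is_true [exists _, _] |- _ =>
      let y := fresh "y" in case/existsP: H => y H; rel_split y
  | H : is_true (has _ _) |- _ => let y := fresh "y" in case/hasP: H => y _ H
  | H : is_true (_ && _) |- _ =>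
      let H1 := fresh "H" in let H2 := fresh "H" in case/andP: H => H1 H2
  | H : is_true (_ == _) |- _ => move/eqP: H => /= H; subst
  end.

Ltac rel_build r_total :=
  repeat match goal with
  | |- is_true [exists _, _] =>
      apply/existsP;
      first [eexists ((_, _), _) | eexists (_, (_, _)) | eexists (_, _) | eexists]
  | |- is_true (has _ _) => apply/hasP; eexists; [exact: r_total|]
  | |- is_true (_ && _) => apply/andP; split
  end; simpl; try (apply/eqP; reflexivity); eassumption.

(* [rel_ext r_total] proves an equation between a composite of relations and
   its pointwise description: it destructs the witnesses on one side and rebuilds
   them as evars on the other, solving equations before matching hypotheses so
   that every evar is fixed by an equation first. *)
Ltac rel_ext r_total :=
  unfold rcomp, rtens, rid, rassocV, rassoc, rlunitV, rlunit, rrunitV, rrunit;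
  apply/idP/idP => H; rel_destruct; simpl in *; rel_build r_total.

(* Quantifiers run over an explicit enumeration [r] of [X], so that the
   decision procedures below compute (the fintype quantifier [[exists x, _]]
   is locked and does not reduce). *)
Section Enumerated.
Variables (X : finType) (r : seq X).
Hypothesis r_total : forall x, x \in r.

Lemma all_rP (P : pred X) : reflect (forall x, P x) (all P r).
Proof. by apply: (iffP allP) => [P_r x | P_x x _]; [apply: P_r (r_total x) | apply: P_x]. Qed.

Lemma rcompE (A B : finType) (R : relT A X) (S : relT X B) x z :
  rcomp S R x z = has (fun y => R x y && S y z) r.
Proof. by apply/existsP/hasP => [[y RS] | [y _ RS]]; exists y. Qed.

Definition post (M : relT X X) (s : seq X) : seq X := [seq z <- r | has (M^~ z) s].

Lemma iter_rcomp_post (M : relT X X) (S : relT unit X) g z :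
  rcomp (iter g (rcomp M) (rid X)) S tt z = (z \in iter g (post M) [seq x <- r | S tt x]).
Proof.
elim: g z => [|g IH] z /=.
  rewrite mem_filter r_total andbT /rcomp /rid.
  by apply/existsP/idP => [[y /andP [? /eqP <-]] | Sz]; [|exists z; rewrite eqxx andbT].
rewrite mem_filter r_total andbT; apply/existsP/hasP => [[y /andP [Sy]] | [y]].
  case/existsP=> w /andP [Rw Mw]; exists w => //.
  by rewrite -IH; apply/existsP; exists y; rewrite Sy.
rewrite -IH => /existsP [x /andP [Sx Rx]] Myz.
by exists x; rewrite Sx; apply/existsP; exists y; rewrite Rx.
Qed.

Section Frobenius.
Variables (eta : relT unit X) (eps : relT X unit) (mu : relT (X * X)%type X).

Definition pairing : relT X X := fun x y => has (fun m => mu (x, y) m && eps m tt) r.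

Definition copairing (beta : relT unit (X * X)%type) : relT X X :=
  fun y z => beta tt (y, z).

Lemma nondeg_forE beta :
  nondeg_for eps mu beta <->
  releq (rcomp (copairing beta) pairing) (rid X) /\
  releq (rcomp pairing (copairing beta)) (rid X).
Proof.
have left_zigzag x z :
  rcomp (rlunit X) (rcomp (rtens eps (rid X)) (rcomp (rtens mu (rid X))
    (rcomp (@rassocV X X X) (rcomp (rtens (rid X) beta) (rrunitV X))))) x z
  = rcomp (copairing beta) pairing x z.
  by rewrite /copairing /pairing; rel_ext r_total.
have right_zigzag x z :
  rcomp (rrunit X) (rcomp (rtens (rid X) eps) (rcomp (rtens (rid X) mu)
    (rcomp (@rassoc X X X) (rcomp (rtens beta (rid X)) (rlunitV X))))) x z
  = rcomp pairing (copairing beta) z x.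
  by rewrite /copairing /pairing; rel_ext r_total.
split=> [[nd1 nd2] | [nd1 nd2]]; split=> x z.
- by rewrite -left_zigzag nd1.
- by rewrite -right_zigzag nd2 /rid eq_sym.
- by rewrite left_zigzag nd1.
- by rewrite right_zigzag nd2 /rid eq_sym.
Qed.

Lemma copairing_unique beta :
  nondeg_for eps mu beta -> forall y z, beta tt (y, z) = pairing z y.
Proof. by case/nondeg_forE => nd1 nd2 y z; exact: (rel_inverse_converse nd1 nd2 z y). Qed.

Definition unitalb : bool :=
  all (fun x => all (fun z =>
    (has (fun e => eta tt e && mu (e, x) z) r == (x == z)) &&
    (has (fun e => eta tt e && mu (x, e) z) r == (x == z))) r) r.

Lemma unitalP : reflect (unital eta mu) unitalb.
Proof.
have left_unit x z : rcomp mu (rcomp (rtens eta (rid X)) (rlunitV X)) x z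
                     = has (fun e => eta tt e && mu (e, x) z) r by rel_ext r_total.
have right_unit x z : rcomp mu (rcomp (rtens (rid X) eta) (rrunitV X)) x z
                      = has (fun e => eta tt e && mu (x, e) z) r by rel_ext r_total.
apply: (iffP (all_rP _)) => [unit_x | [unit_l unit_r] x].
  split=> x z; move/all_rP: (unit_x x) => /(_ z) /andP [/eqP unit_l /eqP unit_r].
  - by rewrite left_unit unit_l.
  - by rewrite right_unit unit_r.
by apply/all_rP => z; rewrite -left_unit -right_unit unit_l unit_r !eqxx.
Qed.

Definition associativeb : bool :=
  all (fun x => all (fun y => all (fun z => all (fun w =>
    has (fun m => mu (x, y) m && mu (m, z) w) r ==
    has (fun m => mu (y, z) m && mu (x, m) w) r) r) r) r) r.

Lemma associativeP : reflect (associative_rel mu) associativeb.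
Proof.
have assoc_l x y z w : rcomp mu (rtens mu (rid X)) ((x, y), z) w
                       = has (fun m => mu (x, y) m && mu (m, z) w) r by rel_ext r_total.
have assoc_r x y z w : rcomp mu (rcomp (rtens (rid X) mu) (@rassoc X X X)) ((x, y), z) w
                       = has (fun m => mu (y, z) m && mu (x, m) w) r by rel_ext r_total.
apply: (iffP idP) => [assoc_xyzw [[x y] z] w | assoc].
  rewrite assoc_l assoc_r; apply/eqP.
  by move: assoc_xyzw => /all_rP/(_ x)/all_rP/(_ y)/all_rP/(_ z)/all_rP/(_ w).
apply/all_rP => x; apply/all_rP => y; apply/all_rP => z; apply/all_rP => w.
by rewrite -assoc_l -assoc_r assoc.
Qed.

Definition commutativeb : bool :=
  all (fun x => all (fun y => all (fun z => mu (x, y) z == mu (y, x) z) r) r) r.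

Lemma commutativeP : reflect (commutative_rel mu) commutativeb.
Proof.
apply: (iffP idP) => [comm x y z | comm].
  by apply/eqP; move: comm => /all_rP/(_ x)/all_rP/(_ y)/all_rP/(_ z).
by apply/all_rP => x; apply/all_rP => y; apply/all_rP => z; rewrite comm.
Qed.

Definition nondegenerateb : bool :=
  all (fun x => all (fun z =>
    (has (fun y => pairing x y && pairing z y) r == (x == z)) &&
    (has (fun y => pairing y x && pairing y z) r == (x == z))) r) r.

Lemma nondegenerateP : reflect (exists beta, nondeg_for eps mu beta) nondegenerateb.
Proof.
apply: (iffP (all_rP _)) => [nd_x | [beta nd] x].
  exists (fun _ p => pairing p.2 p.1); apply/nondeg_forE.
  split=> x z; move/all_rP: (nd_x x) => /(_ z) /andP [/eqP nd1 /eqP nd2];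
    by rewrite rcompE ?nd1 ?nd2.
have copairingE : copairing beta =2 fun y z => pairing z y by exact: copairing_unique.
case/nondeg_forE: nd => nd1 nd2; apply/all_rP => z.
have nd1_xz : has (fun y => pairing x y && pairing z y) r = (x == z).
  by rewrite -[x == z]/(rid X x z) -nd1 rcompE; apply: eq_has => y; rewrite copairingE.
have nd2_xz : has (fun y => pairing y x && pairing y z) r = (x == z).
  by rewrite -[x == z]/(rid X x z) -nd2 rcompE; apply: eq_has => y; rewrite copairingE.
by rewrite nd1_xz nd2_xz eqxx.
Qed.

Definition comm_frobeniusb : bool :=
  [&& unitalb, associativeb, nondegenerateb & commutativeb].

Lemma comm_frobeniusP : reflect (is_comm_Frobenius eta eps mu) comm_frobeniusb.
Proof.
apply: (iffP and4P).
  by case=> /unitalP ? /associativeP ? /nondegenerateP ? /commutativeP ?.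
by case=> /unitalP ? /associativeP ? /nondegenerateP ? /commutativeP ?.
Qed.

Definition handle : relT X X := fun x z =>
  has (fun p1 => has (fun y2 => has (fun p2 =>
    [&& pairing y2 p1, mu (y2, x) p2 & mu (p1, p2) z]) r) r) r.

Lemma mu_deltaE beta :
  nondeg_for eps mu beta -> releq (rcomp mu (delta mu beta)) handle.
Proof.
move=> nd x z.
have -> : rcomp mu (delta mu beta) x z = has (fun p1 => has (fun y2 => has (fun p2 =>
    [&& beta tt (p1, y2), mu (y2, x) p2 & mu (p1, p2) z]) r) r) r.
  by rewrite /delta; rel_ext r_total.
by apply: eq_has => p1; apply: eq_has => y2; apply: eq_has => p2; rewrite (copairing_unique nd).
Qed.

Definition handle_iter g := iter g (post handle) [seq x <- r | eta tt x].

Lemma ZpartE beta g :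
  nondeg_for eps mu beta -> Zpart eta eps mu beta g = has (eps^~ tt) (handle_iter g).
Proof.
move=> nd; rewrite /Zpart rcompE.
have post_handle : post (rcomp mu (delta mu beta)) =1 post handle.
  by move=> s; apply: eq_filter => z; apply: eq_has => y; exact: mu_deltaE.
apply/hasP/hasP => [[y _] | [y y_in eps_y]].
  by rewrite iter_rcomp_post (eq_iter post_handle) => /andP [y_in eps_y]; exists y.
by exists y => //; rewrite iter_rcomp_post (eq_iter post_handle) y_in.
Qed.

Definition Zpart_agreesb n p (P : nat -> bool) : bool :=
  (handle_iter (n + p) == handle_iter n) &&
  all (fun g => has (eps^~ tt) (handle_iter g) == P g) (iota 0 (n + p)).

Lemma Zpart_agrees n p P beta : 0 < p -> (forall k, n <= k -> P (k + p) = P k) ->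
  Zpart_agreesb n p P -> nondeg_for eps mu beta -> forall g, Zpart eta eps mu beta g = P g.
Proof.
move=> p_gt0 per_P /andP [/eqP per init] nd g; rewrite ZpartE //.
apply: (eq_eventually_periodic (u := fun g => has _ (handle_iter g))) p_gt0 _ per_P _ g.
  by move=> k n_le_k; rewrite /handle_iter (iter_periodic per n_le_k).
by move=> k k_lt; apply/eqP; move/allP: init; apply; rewrite mem_iota.
Qed.

End Frobenius.
End Enumerated.

Definition elts : seq elt := [:: a; b; c].

Lemma mem_elts x : x \in elts. Proof. by case: x. Qed.

Definition case_comm_frobeniusb i :=
  comm_frobeniusb elts (eta_of (frob_case i)) (eps_of (frob_case i)) (mu_of (frob_case i)).

(* All 25 orbits are periodic from step 2 on, with period dividing 6. *)
Definition case_Zb (P : nat -> bool) i :=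
  Zpart_agreesb elts (eta_of (frob_case i)) (eps_of (frob_case i)) (mu_of (frob_case i)) 2 6 P.

Lemma frob_cases_comm_frobenius : all case_comm_frobeniusb (iota 1 25).
Proof. by vm_compute. Qed.

Lemma case_Zb_always : all (case_Zb (fun=> true)) (iota 1 12 ++ iota 21 5).
Proof. by vm_compute. Qed.

Lemma case_Zb_13 : case_Zb (eq_op^~ 1) 13.
Proof. by vm_compute. Qed.

Lemma case_Zb_ge1 : all (case_Zb (leq 1)) [:: 14; 15; 16; 18; 19; 20].
Proof. by vm_compute. Qed.

Lemma case_Zb_17 : case_Zb (fun g => g %% 3 == 1) 17.
Proof. by vm_compute. Qed.

Lemma case_ZE (P : nat -> bool) i beta :
  (forall k, 2 <= k -> P (k + 6) = P k) -> case_Zb P i -> Nondeg i beta ->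
  forall g, Z i beta g = P g.
Proof. by move=> per_P Zi nd; apply: (Zpart_agrees mem_elts _ per_P Zi nd). Qed.

Theorem mainTheorem6 :
  (forall i : nat, 1 <= i <= 25 -> IsCF i) /\
  (forall i : nat, (1 <= i <= 12) || (21 <= i <= 25) ->
     forall beta, Nondeg i beta -> forall g : nat, Z i beta g = true) /\
  (forall beta, Nondeg 13 beta -> forall g : nat, Z 13 beta g = true <-> g = 1) /\
  (forall i : nat, i \in [:: 14; 15; 16; 18; 19; 20] ->
     forall beta, Nondeg i beta -> forall g : nat, Z i beta g = true <-> 1 <= g) /\
  (forall beta, Nondeg 17 beta -> forall g : nat, Z 17 beta g = true <-> g %% 3 = 1).
Proof.
have per_eq1 k : 2 <= k -> (k + 6 == 1) = (k == 1) by lia.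
have per_ge1 k : 2 <= k -> (1 <= k + 6) = (1 <= k) by lia.
have per_mod3 k : 2 <= k -> ((k + 6) %% 3 == 1) = (k %% 3 == 1) by lia.
split; [|split; [|split; [|split]]].
- move=> i i_range; apply/(comm_frobeniusP mem_elts).
  by apply: (allP frob_cases_comm_frobenius); rewrite mem_iota; lia.
- move=> i i_range beta nd g; apply: (case_ZE _ (allP case_Zb_always i _) nd) => [// |].
  by rewrite mem_cat !mem_iota; lia.
- move=> beta nd g; rewrite (case_ZE per_eq1 case_Zb_13 nd).
  by split=> [/eqP | ->].
- by move=> i i_in beta nd g; rewrite (case_ZE per_ge1 (allP case_Zb_ge1 i i_in) nd).
- move=> beta nd g; rewrite (case_ZE per_mod3 case_Zb_17 nd).
  by split=> /eqP.
Qed.
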